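(* Let $\mathcal X=[0,1]^t$ with $d(x,y)=\|x-y\|_\infty$, let $\mathcal C=[1/4,3/4]^t$, and let $0<\epsilon<1/64$. Suppose that for some integer $k\ge1$ there is a panel decision function $\widetilde q:\mathcal X^k\to\mathcal C$ such that for every facility location instance $\langle\mathcal X,\mathcal C,d,(x_1,\dots,x_n)\rangle$ (with $n\ge k$), $$\mathbb E_{S\sim\mathcal U_{k,n}}\big[\textsc{Social-Cost}(\widetilde q(S))\big]\le(1+\epsilon)\cdot\textsc{Social-Opt}.$$ Then $k\ge c\,t/\epsilon^2$ for an absolute constant $c>0$ (i.e., $k=\Omega((1/\epsilon)^2 t)$).
   Context: For agent locations $x_1,\dots,x_n\in\mathcal X$, $\textsc{Social-Cost}(q)=\frac1n\sum_{i=1}^n d(q,x_i)$ and $\textsc{Social-Opt}=\min_{q\in\mathcal C}\textsc{Social-Cost}(q)$. For a panel $S\subseteq[n]$ of size $k$, $\widetilde q(S)$ denotes $\widetilde q$ applied to the locations $(x_i)_{i\in S}$. $\mathcal U_{k,n}$ is the uniform distribution over size-$k$ subsets of $[n]$. *)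

From HB Require Import structures.
From mathcomp Require Import all_boot all_order all_algebra.
From mathcomp Require Import classical_sets reals Rstruct.
Set Implicit Arguments. Unset Strict Implicit. Unset Printing Implicit Defensive.
Import Order.TTheory GRing.Theory Num.Theory.
Local Open Scope ring_scope.
Local Open Scope classical_set_scope.

Definition RR := Rdefinitions.R.

Definition pt (t : nat) := 'I_t -> RR.

Definition dinf (t : nat) (x y : pt t) : RR :=
  \big[Num.max/0]_(j < t) `|x j - y j|.

Definition inX (t : nat) (x : pt t) : Prop := forall j, 0 <= x j <= 1.
Definition inC (t : nat) (x : pt t) : Prop := forall j, 1/4 <= x j <= 3/4.

Definition social_cost (t n : nat) (x : 'I_n -> pt t) (q : pt t) : RR :=
  (\sum_(i < n) dinf q (x i)) / n%:R.

(* Social-Opt = min_{q in C} Social-Cost(q) (taken as the infimum, which is attained) *)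
Definition social_opt (t n : nat) (x : 'I_n -> pt t) : RR :=
  inf [set social_cost x q | q in inC (t:=t)].

(* The locations (x_i)_{i in S}, listed in increasing order of the index i,
   as a k-tuple (S has size k). *)
Definition panel (t n k : nat) (x : 'I_n -> pt t) (S : {set 'I_n}) : 'I_k -> pt t :=
  fun j => nth (fun _ => 0) [seq x i | i <- enum S] j.

Definition exp_panel_cost (t n k : nat) (q : ('I_k -> pt t) -> pt t)
    (x : 'I_n -> pt t) : RR :=
  (\sum_(S : {set 'I_n} | #|S| == k) social_cost x (q (@panel t n k x S))) / ('C(n, k))%:R.

(* The hard instances put t * B agents on t coordinates, B on each: an agent sits at the
   point that is 1/2 everywhere except at its own coordinate, where it is 0 or 1 (its bit).
   Draw a hidden sign s_j uniformly for every coordinate and the bits independently, each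
   agreeing with the sign of its coordinate with probability 1/2 + 2d, where d = 4 eps.
   Compared with the center 1/2 + s/4, a (1 + eps)-approximate panel rule must correlate
   with the hidden signs: the correlations T_j between its j-th output and s_j satisfy
   sum_j T_j >= t/8. But the panel sees coordinate j only through its l_j members there, and
   a likelihood-ratio (chi-square) bound gives T_j^2 <= d^2 l_j / 2. Cauchy-Schwarz with
   sum_j l_j = k then yields t <= 32 d^2 k = 512 eps^2 k. *)

From mathcomp Require Import all_boot all_order all_algebra.
From mathcomp Require Import classical_sets reals Rstruct.
From mathcomp Require Import ring lra.
Set Implicit Arguments. Unset Strict Implicit. Unset Printing Implicit Defensive.
Import Order.TTheory GRing.Theory Num.Theory.
Local Open Scope ring_scope.

Section RealFacts.
Variable R : realFieldType.

Lemma sqr_wsum_le (J : finType) (w x : J -> R) : (forall j, 0 <= w j) ->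
  (\sum_j w j * x j) ^+ 2 <= (\sum_j w j) * \sum_j w j * x j ^+ 2.
Proof.
move=> w_ge0; set W := \sum_j w j; set S := \sum_j w j * x j.
set Q := \sum_j w j * x j ^+ 2.
have expand : \sum_j w j * (W * x j - S) ^+ 2 = W * (W * Q - S ^+ 2).
  transitivity (\sum_j (W ^+ 2 * (w j * x j ^+ 2) - 2 * W * S * (w j * x j)
                        + S ^+ 2 * w j)).
    by apply: eq_bigr => j _; ring.
  by rewrite big_split sumrB -!mulr_sumr -/W -/S -/Q /=; ring.
have : 0 <= W * (W * Q - S ^+ 2).
  by rewrite -expand; apply: sumr_ge0 => j _; rewrite mulr_ge0 ?sqr_ge0.
have [W0 _|W_gt0] := eqVneq W 0.
  have w0 j : w j = 0 by apply: (psumr_eq0P (fun j _ => w_ge0 j) W0).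
  have -> : S = 0 by rewrite /S big1 // => j _; rewrite w0 mul0r.
  by rewrite W0 expr0n mul0r.
have W_pos : 0 < W by rewrite lt_def W_gt0 sumr_ge0.
by rewrite pmulr_rge0 // subr_ge0.
Qed.

Lemma sqr_le_of_norm_le (x c : R) : `|x| <= c -> x ^+ 2 <= c ^+ 2.
Proof. by rewrite ler_norml => /andP[lo hi]; nra. Qed.

Lemma exprD1_le (x : R) l : 0 <= x -> x * l%:R <= 1/2 -> (1 + x) ^+ l <= 1 + 2 * x * l%:R.
Proof.
move=> x_ge0; elim: l => [|l IH] xl; first by rewrite expr0 mulr0 addr0.
have xl' : x * l%:R <= 1/2 by apply: le_trans xl; rewrite ler_wpM2l // ler_nat.
have a_le := IH xl'.
rewrite exprS -addn1 natrD.
have : (1 + x) * (1 + x) ^+ l <= (1 + x) * (1 + 2 * x * l%:R) by rewrite ler_wpM2l //; lra.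
have : 0 <= x * (1/2 - x * l%:R) by apply: mulr_ge0 => //; lra.
lra.
Qed.

Lemma exprD1_sub_exprB1_le (x : R) l : 0 <= x <= 1 -> x * l%:R <= 1/2 ->
  (1 + x) ^+ l - (1 - x) ^+ l <= 3 * x * l%:R.
Proof.
case/andP=> x_ge0 x_le1; elim: l => [|l IH] xl; first by rewrite !expr0 subrr mulr0.
have xl' : x * l%:R <= 1/2 by apply: le_trans xl; rewrite ler_wpM2l // ler_nat.
have a_le := exprD1_le x_ge0 xl'.
have c_le : (1 - x) ^+ l <= 1 by apply: exprn_ile1; lra.
have gap := IH xl'.
rewrite !exprS -addn1 natrD.
have : x * ((1 + x) ^+ l + (1 - x) ^+ l) <= x * 3 by rewrite ler_wpM2l //; lra.
lra.
Qed.

Lemma sum_draws_cst n k (c : R) :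
  \sum_(S : {set 'I_n} | #|S| == k) c = 'C(n, k)%:R * c.
Proof.
have -> : \sum_(S : {set 'I_n} | #|S| == k) c = \sum_(S in [set S : {set 'I_n} | #|S| == k]) c.
  by apply: eq_bigl => S; rewrite inE.
by rewrite sumr_const card_draws card_ord mulr_natl.
Qed.

Lemma exists_le_of_sum_le (J : finType) (P : pred J) (F : J -> R) c :
  (exists j, P j) -> \sum_(j | P j) F j <= \sum_(j | P j) c -> exists2 j, P j & F j <= c.
Proof.
move=> [j0 Pj0] le_sum; case: (pickP [pred j | P j && (F j <= c)]) => [j /andP[]|none].
  by exists j.
have lt_c j : P j -> c < F j.
  by move=> Pj; have := none j; rewrite /= Pj ltNge => /negbT.
move: le_sum; rewrite leNgt (ltr_sum _ lt_c) //.
by apply/hasP; exists j0; rewrite ?mem_index_enum.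
Qed.

End RealFacts.

Lemma exists_draw n k : (k <= n)%N -> exists S : {set 'I_n}, #|S| == k.
Proof.
move=> k_le_n; have : (0 < #|[set S : {set 'I_n} | #|S| == k]|)%N.
  by rewrite card_draws card_ord bin_gt0.
by rewrite card_gt0 => /set0Pn[S]; rewrite inE; exists S.
Qed.

Section BiasedCoins.
Variable R : realFieldType.

Definition sgnb (v : bool) : R := if v then 1 else -1.

Lemma sgnbM_self v : sgnb v * sgnb v = 1.
Proof. by case: v; rewrite /sgnb ?mulrNN mulr1. Qed.

Lemma normr_sgnbM v x : `|sgnb v * x| = `|x|.
Proof. by case: v; rewrite /sgnb ?mulN1r ?mul1r ?normrN. Qed.

(* A coin of bias a shows true with probability (1 + a) / 2; every distribution in the
   argument (hidden signs, agents' bits, and their tilts) is a product of such coins. *)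
Definition coin (a : R) (v : bool) : R := (1 + a * sgnb v) / 2.

Definition coin_mean (a : R) (g : bool -> R) : R :=
  coin a true * g true + coin a false * g false.

Lemma coin_meanE a g : coin_mean a g = (g true + g false + a * (g true - g false)) / 2.
Proof. by rewrite /coin_mean /coin /sgnb; ring. Qed.

Lemma coin_mean_cst a c : coin_mean a (fun=> c) = c.
Proof. by rewrite coin_meanE; field. Qed.

Lemma coin_ge0 a v : `|a| <= 1 -> 0 <= coin a v.
Proof.
by rewrite ler_norml => /andP[? ?]; case: v; rewrite /coin /sgnb; lra.
Qed.

Lemma coin_sum a : coin a true + coin a false = 1.
Proof. by have := coin_mean_cst a 1; rewrite /coin_mean !mulr1. Qed.

Section CoinProduct.
Variable I : finType.
Implicit Types (i : I) (r : I -> R) (b : {ffun I -> bool}) (F G : {ffun I -> bool} -> R).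

Definition cweight r b : R := \prod_i coin (r i) (b i).

Definition cexp r F : R := \sum_b cweight r b * F b.

Definition depends_only_on F (A : {pred I}) :=
  forall b b', {in A, b =1 b'} -> F b = F b'.

Lemma depends_only_onS F (A A' : {pred I}) :
  {subset A <= A'} -> depends_only_on F A -> depends_only_on F A'.
Proof. by move=> sAA' FA b b' eqbb'; apply: FA => i /sAA'; apply: eqbb'. Qed.

Lemma depends_only_onM F G (A : {pred I}) : depends_only_on F A -> depends_only_on G A ->
  depends_only_on (fun b => F b * G b) A.
Proof. by move=> FA GA b b' eqbb'; rewrite (FA b b') ?(GA b b'). Qed.

Lemma eq_cexp r F G : F =1 G -> cexp r F = cexp r G.
Proof. by move=> eqFG; apply: eq_bigr => b _; rewrite eqFG. Qed.

Lemma eq_cexp_bias r r' F : r =1 r' -> cexp r F = cexp r' F.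
Proof.
by move=> eqr; apply: eq_bigr => b _; congr (_ * _); apply: eq_bigr => i _; rewrite eqr.
Qed.

Lemma cexpD r F G : cexp r (fun b => F b + G b) = cexp r F + cexp r G.
Proof. by rewrite /cexp -big_split; apply: eq_bigr => b _; rewrite mulrDr. Qed.

Lemma cexpZ r a F : cexp r (fun b => a * F b) = a * cexp r F.
Proof. by rewrite /cexp mulr_sumr; apply: eq_bigr => b _; rewrite mulrCA. Qed.

Lemma cexpB r F G : cexp r (fun b => F b - G b) = cexp r F - cexp r G.
Proof.
rewrite -mulN1r -cexpZ -cexpD; apply: eq_cexp => b; by rewrite mulN1r.
Qed.

Lemma cexp_sum (J : finType) (P : pred J) r (F : J -> {ffun I -> bool} -> R) :
  cexp r (fun b => \sum_(j | P j) F j b) = \sum_(j | P j) cexp r (F j).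
Proof. by rewrite /cexp exchange_big; apply: eq_bigr => b _; rewrite mulr_sumr. Qed.

Lemma cexp_prod r (h : I -> bool -> R) :
  cexp r (fun b => \prod_i h i (b i)) = \prod_i coin_mean (r i) (h i).
Proof.
rewrite /coin_mean (eq_bigr (fun i => \sum_v coin (r i) v * h i v)); last first.
  by move=> i _; rewrite big_bool.
rewrite (bigA_distr_bigA (fun i v => coin (r i) v * h i v)).
by apply: eq_bigr => b _; rewrite big_split.
Qed.

Lemma cexp_cst r c : cexp r (fun=> c) = c.
Proof.
have one : cexp r (fun=> 1) = 1.
  transitivity (\prod_i coin_mean (r i) (fun=> 1)); last first.
    by rewrite big1 // => i _; rewrite coin_mean_cst.
  by rewrite -(cexp_prod r (fun _ _ => 1)); apply: eq_cexp => b; rewrite big1.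
by rewrite -[c]mulr1 cexpZ one.
Qed.

Definition flip i b : {ffun I -> bool} := [ffun l => if l == i then ~~ b l else b l].

Lemma flipK i : involutive (flip i).
Proof. by move=> b; apply/ffunP => l; rewrite !ffunE; case: eqP; rewrite ?negbK. Qed.

Lemma sum_flip_pairs i (H : {ffun I -> bool} -> R) :
  \sum_(b : {ffun I -> bool}) H b = \sum_(b : {ffun I -> bool} | b i) (H b + H (flip i b)).
Proof.
rewrite (bigID (fun b : {ffun I -> bool} => b i)) /= big_split; congr (_ + _).
rewrite (reindex (flip i)) /=; last by exists (flip i) => b _; rewrite flipK.
by apply: eq_bigl => b; rewrite ffunE eqxx negbK.
Qed.

Lemma cexp_coord r i g F : depends_only_on F (predC1 i) ->
  cexp r (fun b => g (b i) * F b) = coin_mean (r i) g * cexp r F.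
Proof.
move=> Fi; rewrite /cexp !(sum_flip_pairs i) mulr_sumr; apply: eq_bigr => b bi.
have flip_off : {in predC1 i, b =1 flip i b}.
  by move=> l /negPf li; rewrite ffunE li.
have flip_i : flip i b i = false by rewrite ffunE eqxx bi.
set rest := \prod_(l | l != i) coin (r l) (b l).
have wb : cweight r b = coin (r i) true * rest by rewrite /cweight (bigD1 i) // bi.
have wfb : cweight r (flip i b) = coin (r i) false * rest.
  rewrite /cweight (bigD1 i) //= flip_i; congr (_ * _).
  by apply: eq_bigr => l li; rewrite -flip_off.
rewrite wb wfb -(Fi _ _ flip_off) bi flip_i /coin_mean.
have := coin_sum (r i); set ct := coin _ true; set cf := coin _ false => sum1.
have -> : ct * rest * F b + cf * rest * F b = (ct + cf) * rest * F b by ring.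
by rewrite sum1; ring.
Qed.

Lemma cexp_mean1_seq r (s : seq I) (g : I -> bool -> R) F : uniq s ->
    {in s, forall i, coin_mean (r i) (g i) = 1} -> depends_only_on F [predC s] ->
  cexp r (fun b => \prod_(i <- s) g i (b i) * F b) = cexp r F.
Proof.
elim: s => [|a s IH] /=.
  by move=> *; apply: eq_cexp => b; rewrite big_nil mul1r.
case/andP=> a_s s_uniq g1 Fs.
have Fs' : depends_only_on F [predC s].
  by apply: depends_only_onS Fs => i; rewrite !inE negb_or => /andP[].
rewrite -IH // => [|i si]; last by apply: g1; rewrite inE si orbT.
under eq_cexp => b do rewrite big_cons -mulrA.
rewrite cexp_coord ?g1 ?mem_head ?mul1r // => b b' eqbb'; congr (_ * _).
  by apply: eq_big_seq => i si; congr g; apply: eqbb'; apply: contraNneq a_s => <-.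
apply: Fs => i; rewrite !inE negb_or => /andP[ia _]; exact: eqbb'.
Qed.

Lemma cexp_mean1 r (P : pred I) (g : I -> bool -> R) F :
    {in P, forall i, coin_mean (r i) (g i) = 1} -> depends_only_on F [predC P] ->
  cexp r (fun b => \prod_(i | P i) g i (b i) * F b) = cexp r F.
Proof.
have memP : [seq i <- index_enum I | P i] =i P.
  by move=> i; rewrite mem_filter mem_index_enum andbT.
move=> g1 FP; under eq_cexp => b do rewrite -big_filter.
apply: cexp_mean1_seq => [|i|]; first exact/filter_uniq/index_enum_uniq.
  by rewrite memP; apply: g1.
by apply: depends_only_onS FP => i; rewrite !inE memP.
Qed.

Lemma cexp_coord_sgnb r i (F : bool -> {ffun I -> bool} -> R) :
    (forall v, depends_only_on (F v) (predC1 i)) ->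
  cexp r (fun b => sgnb (b i) * F (b i) b) =
  coin (r i) true * cexp r (F true) - coin (r i) false * cexp r (F false).
Proof.
move=> Fi; rewrite (eq_cexp _ (G := fun b => (b i)%:R * F true b - (~~ b i)%:R * F false b)).
  rewrite cexpB (cexp_coord r (fun v : bool => v%:R) (Fi true)).
  rewrite (cexp_coord r (fun v : bool => (~~ v)%:R) (Fi false)).
  by rewrite /coin_mean /= !mulr1 !mulr0 addr0 add0r.
by move=> b; case: (b i); rewrite /sgnb /=; ring.
Qed.

Lemma cexp_tilt r (A : {pred I}) F :
  cexp r F = cexp (fun i => if i \in A then 0 else r i)
                  (fun b => \prod_(i in A) (1 + r i * sgnb (b i)) * F b).
Proof.
apply: eq_bigr => b _; rewrite mulrA; congr (_ * _).
rewrite /cweight [\prod_(i in A) _]big_mkcond -big_split /=; apply: eq_bigr => i _.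
by case: ifP => _; rewrite /coin; ring.
Qed.

Section NonnegativeBias.
Variable r : I -> R.
Hypothesis r_le1 : forall i, `|r i| <= 1.

Lemma cweight_ge0 b : 0 <= cweight r b.
Proof. by apply: prodr_ge0 => i _; apply: coin_ge0. Qed.

Lemma ler_cexp F G : (forall b, F b <= G b) -> cexp r F <= cexp r G.
Proof. by move=> leFG; apply: ler_sum => b _; rewrite ler_wpM2l ?cweight_ge0. Qed.

Lemma cexp_norm_le F (c : R) : (forall b, `|F b| <= c) -> `|cexp r F| <= c.
Proof.
move=> Fc; have Fc' b : - c <= F b <= c by rewrite -ler_norml.
rewrite ler_norml; apply/andP; split.
  by rewrite -(cexp_cst r (- c)); apply: ler_cexp => b; case/andP: (Fc' b).
by rewrite -(cexp_cst r c); apply: ler_cexp => b; case/andP: (Fc' b).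
Qed.

Lemma cexp_sqr_le F : cexp r F ^+ 2 <= cexp r (fun b => F b ^+ 2).
Proof.
have := sqr_wsum_le F cweight_ge0.
have -> : \sum_(b : {ffun I -> bool}) cweight r b = 1.
  by rewrite -(cexp_cst r 1); apply: eq_bigr => b _; rewrite mulr1.
by rewrite mul1r.
Qed.

End NonnegativeBias.

End CoinProduct.

End BiasedCoins.

Arguments sgnb {R} v.

Section Poles.
Variable t : nat.
Implicit Types (j l : 'I_t) (v : bool) (Q : pt t).

Definition pole j v : pt t := fun l => if l == j then v%:R else 1/2.

Lemma pole_inX j v : inX (pole j v).
Proof. by move=> l; rewrite /pole; case: (l == j); case: v => /=; lra. Qed.

Lemma dinf_ge0 (x y : pt t) : 0 <= dinf x y.
Proof. exact: bigmax_ge_id. Qed.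

Lemma dinf_pole Q j v : inC Q -> dinf Q (pole j v) = if v then 1 - Q j else Q j.
Proof.
move=> QC; have /andP[Qj_lo Qj_hi] := QC j.
have at_j : `|Q j - pole j v j| = if v then 1 - Q j else Q j.
  rewrite /pole eqxx; case: v => /=; last by rewrite subr0 ger0_norm //; lra.
  by rewrite ler0_norm ?opprB //; lra.
apply/eqP; rewrite eq_le -at_j; apply/andP; split; last first.
  exact: (le_bigmax _ (fun l => `|Q l - pole j v l|) j).
apply: bigmax_le => [|l _]; first exact: normr_ge0.
rewrite at_j /pole; case: eqP => [->|_]; first by rewrite -at_j /pole eqxx.
have /andP[Ql_lo Ql_hi] := QC l.
by rewrite ler_norml; case: v {at_j}; apply/andP; split; lra.
Qed.

Definition sign_center (s : {ffun 'I_t -> bool}) : pt t := fun l => 1/2 + sgnb (s l) / 4.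

Lemma sign_center_inC s : inC (sign_center s).
Proof. by move=> l; rewrite /sign_center /sgnb; case: (s l); apply/andP; split; lra. Qed.

End Poles.

Lemma panel_inX t n k (x : 'I_n -> pt t) S :
  (forall i, inX (x i)) -> forall j, inX (@panel t n k x S j).
Proof.
move=> xX j; rewrite /panel.
elim: (enum S) (nat_of_ord j) => [|a s IH] [|m] //= l; rewrite ?lexx ?ler01 //; exact: xX.
Qed.

Lemma eq_panel t n k (x x' : 'I_n -> pt t) (S : {set 'I_n}) :
  {in S, x =1 x'} -> @panel t n k x S = @panel t n k x' S.
Proof.
move=> eqxx'; have /eq_in_map eq_seq : {in enum S, x =1 x'}.
  by move=> i; rewrite mem_enum => /eqxx'.
by rewrite /panel eq_seq.
Qed.

Section HardInstance.
Variables t B : nat.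

Definition nagents := #|{: 'I_t * 'I_B}|.
Local Notation n := nagents.

Definition coord (i : 'I_n) : 'I_t := (enum_val i).1.

Lemma nagentsE : n = (t * B)%N.
Proof. by rewrite /n card_prod !card_ord. Qed.

Lemma sum_coord (f : 'I_t -> RR) : \sum_(i < n) f (coord i) = B%:R * \sum_j f j.
Proof.
rewrite (reindex (@enum_rank _)) /=; last first.
  by exists enum_val => x _; [rewrite enum_rankK | rewrite enum_valK].
rewrite /coord; under eq_bigr do rewrite enum_rankK.
rewrite -(pair_bigA _ (fun j (_ : 'I_B) => f j)) mulr_sumr /=.
by apply: eq_bigr => j _; rewrite sumr_const card_ord mulr_natl.
Qed.

Definition hard_instance (b : {ffun 'I_n -> bool}) (i : 'I_n) : pt t :=
  pole (coord i) (b i).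

Lemma social_cost_hard_instance b Q : inC Q ->
  social_cost (hard_instance b) Q =
  (\sum_i (if b i then 1 - Q (coord i) else Q (coord i))) / n%:R.
Proof. by move=> QC; congr (_ / _); apply: eq_bigr => i _; rewrite dinf_pole. Qed.

Lemma sign_center_cost_le s b : social_cost (hard_instance b) (sign_center s) <= 3/4.
Proof.
rewrite social_cost_hard_instance; last exact: sign_center_inC.
have term_le i : (if b i then 1 - sign_center s (coord i) else sign_center s (coord i)) <= 3/4.
  by rewrite /sign_center /sgnb; case: (b i); case: (s _); lra.
have n_inv_ge0 : 0 <= n%:R^-1 :> RR by rewrite invr_ge0.
apply: le_trans (ler_wpM2r n_inv_ge0 (ler_sum _ (fun i _ => term_le i))) _.
rewrite sumr_const card_ord -(mulr_natr (3/4)).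
have [->|n_neq0] := eqVneq (n%:R : RR) 0; first by rewrite invr0 mulr0; lra.
by rewrite mulfK.
Qed.

Definition block (S : {set 'I_n}) (j : 'I_t) := [set i in S | coord i == j].

Lemma sum_card_block S : \sum_j (#|block S j|%:R : RR) = #|S|%:R.
Proof.
have card_sum (A : {set 'I_n}) : (#|A|%:R : RR) = \sum_(i in A) 1 by rewrite sumr_const.
rewrite card_sum (partition_big coord predT) //=.
by apply: eq_bigr => j _; rewrite card_sum; apply: eq_bigl => i; rewrite inE.
Qed.

End HardInstance.

Section PanelCorrelation.
Variables (t B k : nat) (q : ('I_k -> pt t) -> pt t) (d : RR).
Hypothesis q_inC : forall y, (forall j, inX (y j)) -> inC (q y).
Hypotheses (d_ge0 : 0 <= d) (d_le : d <= 1/4).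

Local Notation n := (nagents t B).
Implicit Types (S : {set 'I_n}) (s : {ffun 'I_t -> bool}) (b : {ffun 'I_n -> bool}).
Implicit Types (i : 'I_n) (j : 'I_t).

Definition bias s i : RR := 2 * d * sgnb (s (coord i)).

Lemma bias_le1 s i : `|bias s i| <= 1.
Proof. by rewrite /bias mulrC normr_sgnbM ger0_norm; move: d_ge0 d_le; lra. Qed.

Definition panel_out S b : pt t := q (panel (k := k) (hard_instance b) S).

Lemma panel_out_inC S b : inC (panel_out S b).
Proof. by apply: q_inC; apply: panel_inX => i; apply: pole_inX. Qed.

Lemma panel_out_depends S (F : pt t -> RR) :
  depends_only_on (fun b => F (panel_out S b)) S.
Proof.
move=> b b' eqbb'; rewrite /panel_out (@eq_panel _ _ k _ (hard_instance b')) //.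
by move=> i /eqbb'; rewrite /hard_instance => ->.
Qed.

Definition panel_dev S j b : RR := panel_out S b j - 1/2.

Lemma panel_dev_norm_le S j b : `|panel_dev S j b| <= 1/4.
Proof.
have /andP[lo hi] := panel_out_inC S b j.
by rewrite ler_norml /panel_dev; apply/andP; split; lra.
Qed.

Definition corr S j : RR :=
  cexp (fun=> 0) (fun s => sgnb (s j) * cexp (bias s) (panel_dev S j)).

Lemma corr_norm_le S j : `|corr S j| <= 1/4.
Proof.
apply: cexp_norm_le => [l|s]; first by rewrite normr0.
by rewrite normr_sgnbM; apply: (cexp_norm_le (bias_le1 s)) => b; apply: panel_dev_norm_le.
Qed.

Definition excess S s b i : RR :=
  - sgnb (b i) * (panel_out S b (coord i) - sign_center s (coord i)).

Lemma social_cost_excess S s b :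
  social_cost (hard_instance b) (panel_out S b) -
  social_cost (hard_instance b) (sign_center s) = (\sum_i excess S s b i) / n%:R.
Proof.
rewrite (social_cost_hard_instance _ (panel_out_inC S b)).
rewrite (social_cost_hard_instance _ (sign_center_inC s)).
rewrite -mulrBl -sumrB; congr (_ / _); apply: eq_bigr => i _.
by rewrite /excess /sgnb; case: (b i); ring.
Qed.

Lemma excess_mean_out S i : i \notin S ->
  cexp (fun=> 0) (fun s => cexp (bias s) (fun b => excess S s b i)) =
  d / 2 - 2 * d * corr S (coord i).
Proof.
move=> iS; rewrite /corr -[d / 2](cexp_cst (fun _ : 'I_t => 0)) -cexpZ -cexpB.
apply: eq_cexp => s; rewrite /excess.
rewrite (cexp_coord _ (fun v => - sgnb v)); last first.
  apply: depends_only_onS (@panel_out_depends S (fun y => y (coord i) - _)) => l lS.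
  by apply: contraNneq iS => <-.
rewrite coin_meanE.
rewrite (eq_cexp _ (G := fun b => panel_dev S (coord i) b - (sign_center s (coord i) - 1/2))).
  rewrite cexpB cexp_cst; set E := cexp _ _.
  by rewrite /bias /sign_center /sgnb; case: (s (coord i)); field.
by move=> b; rewrite /panel_dev; ring.
Qed.

Lemma excess_ge S s b i : - (1/2) <= excess S s b i.
Proof.
have /andP[lo hi] := panel_out_inC S b (coord i).
by rewrite /excess /sign_center /sgnb; case: (b i); case: (s (coord i)); lra.
Qed.

Lemma excess_mean_ge S :
  \sum_(i < n) (d / 2 - 2 * d * corr S (coord i)) - #|S|%:R * (1/2 + d) <=
  cexp (fun=> 0) (fun s => cexp (bias s) (fun b => \sum_i excess S s b i)).
Proof.
under eq_cexp => s do rewrite cexp_sum.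
have -> : #|S|%:R * (1/2 + d) = \sum_(i < n) (if i \in S then 1/2 + d else 0).
  by rewrite -big_mkcond /= sumr_const mulr_natl.
rewrite cexp_sum -sumrB; apply: ler_sum => i _.
case: ifP => iS; last by rewrite subr0 excess_mean_out ?iS.
have /andP[lo _] : - (1/4) <= corr S (coord i) <= 1/4 by rewrite -ler_norml corr_norm_le.
have mean_ge : - (1/2) <= cexp (fun=> 0) (fun s => cexp (bias s) (fun b => excess S s b i)).
  rewrite -(cexp_cst (fun _ : 'I_t => 0) (- (1/2))); apply: ler_cexp => [l|s].
    by rewrite normr0.
  rewrite -(cexp_cst (bias s) (- (1/2))); apply: ler_cexp => [|b]; first exact: bias_le1.
  exact: excess_ge.
have := mulr_ge0 d_ge0 (_ : 0 <= corr S (coord i) + 1/4); lra.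
Qed.

(* Likelihood ratio, against fair coins, of the bits of the panel members on coordinate j
   when s_j = a. *)
Definition lr S j (a : bool) b : RR :=
  \prod_(i in block S j) (1 + 2 * d * sgnb a * sgnb (b i)).

Definition bias_off s j i : RR := if coord i == j then 0 else bias s i.

Lemma lr_depends S j a : depends_only_on (lr S j a) S.
Proof.
move=> b b' eqbb'; apply: eq_bigr => i; rewrite inE => /andP[iS _].
by rewrite eqbb'.
Qed.

Lemma cexp_bias_tilt S j s :
  cexp (bias s) (panel_dev S j) =
  cexp (bias_off s j) (fun b => lr S j (s j) b * panel_dev S j b).
Proof.
rewrite (cexp_tilt _ [pred i | coord i == j]).
rewrite (@eq_cexp_bias _ _ _ (bias_off s j)) => [|i]; last by rewrite inE.
set P := [pred i | (coord i == j) && (i \notin S)].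
transitivity (cexp (bias_off s j) (fun b =>
    \prod_(i | P i) (1 + bias s i * sgnb (b i)) * (lr S j (s j) b * panel_dev S j b))).
  apply: eq_cexp => b; rewrite mulrA; congr (_ * _).
  rewrite (bigID (mem S)) /= mulrC; congr (_ * _).
    apply: eq_big => i; first by rewrite !inE andbC.
    by rewrite inE => /andP[/eqP ci _]; rewrite /bias ci.
apply: (@cexp_mean1 _ _ _ P (fun i v => 1 + bias s i * sgnb v)) => [i /andP[/eqP ci _]|].
  by rewrite coin_meanE /bias_off ci eqxx mul0r addr0 /sgnb; field.
have SP : {subset S <= [predC P]} by move=> i iS; rewrite !inE iS andbF.
apply: depends_only_onM; apply: depends_only_onS SP _; first exact: lr_depends.
exact: (@panel_out_depends S (fun y => y j - 1/2)).
Qed.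

Lemma corr_lr S j : corr S j = 1/2 * cexp (fun=> 0) (fun s =>
  cexp (bias_off s j) (fun b => (lr S j true b - lr S j false b) * panel_dev S j b)).
Proof.
pose G a s := cexp (bias_off s j) (fun b => lr S j a b * panel_dev S j b).
have G_off a : depends_only_on (G a) (predC1 j).
  move=> s s' eqss'; apply: eq_cexp_bias => i; rewrite /bias_off /bias.
  by case: eqP => // /eqP ci; rewrite eqss'.
rewrite /corr (eq_cexp _ (G := fun s => sgnb (s j) * G (s j) s)); last first.
  by move=> s; rewrite cexp_bias_tilt.
rewrite (cexp_coord_sgnb _ G_off) /coin !mul0r !addr0 -mulrBr -cexpB.
by congr (_ * _); apply: eq_cexp => s; rewrite /G -cexpB; apply: eq_cexp => b; ring.
Qed.

Lemma cexp_lrM S j s a c :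
  cexp (bias_off s j) (fun b => lr S j a b * lr S j c b) =
  (1 + 4 * d ^+ 2 * (sgnb a * sgnb c)) ^+ #|block S j|.
Proof.
pose h i v := if i \in block S j
  then (1 + 2 * d * sgnb a * sgnb v) * (1 + 2 * d * sgnb c * sgnb v) else 1.
rewrite (eq_cexp _ (G := fun b => \prod_i h i (b i))) => [|b]; last first.
  by rewrite /lr -big_split big_mkcond.
rewrite cexp_prod (eq_bigr (fun i => if i \in block S j
  then 1 + 4 * d ^+ 2 * (sgnb a * sgnb c) else 1)) => [|i _].
  by rewrite -big_mkcond prodr_const.
rewrite /h; case: ifP => [|_]; last exact: coin_mean_cst.
rewrite inE => /andP[_ /eqP ci]; rewrite coin_meanE /bias_off ci eqxx mul0r addr0 /sgnb.
by field.
Qed.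

Lemma bias_off_le1 s j i : `|bias_off s j i| <= 1.
Proof. by rewrite /bias_off; case: eqP => _; rewrite ?normr0 ?bias_le1. Qed.

Lemma cexp_lr_gap_sqr_le S j s : 4 * d ^+ 2 * #|block S j|%:R <= 1/2 ->
  cexp (bias_off s j) (fun b => (lr S j true b - lr S j false b) ^+ 2) <=
  24 * d ^+ 2 * #|block S j|%:R.
Proof.
rewrite (eq_cexp _ (G := fun b => lr S j true b * lr S j true b
    - 2 * (lr S j true b * lr S j false b) + lr S j false b * lr S j false b)); last first.
  by move=> b; ring.
rewrite cexpD cexpB cexpZ !cexp_lrM !sgnbM_self mulr1.
have -> : sgnb true * sgnb false = -1 :> RR by rewrite /sgnb mul1r.
move: #|block S j| => l small.
have x_ge0 : 0 <= 4 * d ^+ 2 by rewrite mulr_ge0 ?sqr_ge0.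
have x_le1 : 4 * d ^+ 2 <= 1.
  by rewrite expr2; have := ler_pM d_ge0 d_ge0 d_le d_le; lra.
have := exprD1_sub_exprB1_le (introT andP (conj x_ge0 x_le1)) small.
rewrite mulrN1; lra.
Qed.

Lemma corr_sqr_le S j : corr S j ^+ 2 <= d ^+ 2 * #|block S j|%:R / 2.
Proof.
have dl_ge0 : 0 <= d ^+ 2 * #|block S j|%:R by rewrite mulr_ge0 ?sqr_ge0.
have [small|large] := lerP (4 * d ^+ 2 * #|block S j|%:R) (1/2); last first.
  have := sqr_le_of_norm_le (corr_norm_le S j); rewrite (expr2 (1/4)).
  by move: dl_ge0 large; move: (#|block S j|%:R) => L; lra.
pose gap b := lr S j true b - lr S j false b.
pose H s := cexp (bias_off s j) (fun b => gap b * panel_dev S j b).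
have H_sqr s : H s ^+ 2 <= 3/2 * (d ^+ 2 * #|block S j|%:R).
  apply: le_trans (cexp_sqr_le (bias_off_le1 s j) _) _.
  apply: (@le_trans _ _ (cexp (bias_off s j) (fun b => 1/16 * gap b ^+ 2))).
    apply: ler_cexp => [i|b]; first exact: bias_off_le1.
    rewrite exprMn mulrC ler_wpM2r ?sqr_ge0 //.
    by have := sqr_le_of_norm_le (panel_dev_norm_le S j b); rewrite (expr2 (1/4)); lra.
  rewrite cexpZ; move: (cexp_lr_gap_sqr_le s small); rewrite -/(gap _).
  by move: (#|block S j|%:R) => L; lra.
have uniform_le1 (l : 'I_t) : `|(fun=> 0 : RR) l| <= 1 by rewrite normr0.
have : cexp (fun=> 0) (fun s => H s ^+ 2) <= 3/2 * (d ^+ 2 * #|block S j|%:R).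
  by rewrite -[X in _ <= X](cexp_cst (fun _ : 'I_t => 0)); apply: ler_cexp.
have := cexp_sqr_le uniform_le1 H; clear uniform_le1.
have -> : corr S j = 1/2 * cexp (fun=> 0) H by exact: corr_lr.
rewrite exprMn (expr2 (1/2)); move: dl_ge0.
move: (cexp _ H) (cexp _ (fun s => H s ^+ 2)) (#|block S j|%:R : RR) => E E2 L.
lra.
Qed.

End PanelCorrelation.

Section ApproximationLowerBound.
Variables (t B k : nat) (q : ('I_k -> pt t) -> pt t) (eps : RR).
Hypothesis q_inC : forall y, (forall j, inX (y j)) -> inC (q y).
Hypothesis q_approx : forall n (x : 'I_n -> pt t), (k <= n)%N -> (forall i, inX (x i)) ->
  exp_panel_cost q x <= (1 + eps) * social_opt x.
Hypotheses (eps_gt0 : 0 < eps) (eps_le : eps <= 1/16).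
Hypotheses (t_gt0 : (0 < t)%N) (k_gt0 : (0 < k)%N) (B_large : (4 * k)%:R <= B%:R * eps).

Local Notation n := (nagents t B).

Lemma k_le_nagents : (k <= n)%N.
Proof.
have k_le_B : (k <= B)%N.
  have : 0 <= B%:R * (1/16 - eps) :> RR by rewrite mulr_ge0 ?subr_ge0.
  have := ler0n RR B; rewrite -(ler_nat RR); move: B_large; rewrite natrM; lra.
by rewrite nagentsE; apply: leq_trans k_le_B (leq_pmull _ t_gt0).
Qed.

Lemma sum_excess_le s b :
  \sum_(S : {set 'I_n} | #|S| == k) \sum_i excess q S s b i <=
  'C(n, k)%:R * (n%:R * (3/4 * eps)).
Proof.
have n_gt0 : (0 < n)%N := leq_trans k_gt0 k_le_nagents.
pose x := hard_instance b; pose cc := social_cost x (sign_center s).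
have opt_le : social_opt x <= cc.
  apply: ge_inf; last by exists (sign_center s) => //; apply: sign_center_inC.
  exists 0 => _ [Q _ <-]; apply: divr_ge0 (ler0n _ _).
  by apply: sumr_ge0 => i _; apply: dinf_ge0.
have cc_le : cc <= 3/4 := sign_center_cost_le s b.
have approx : \sum_(S : {set 'I_n} | #|S| == k) social_cost x (panel_out q S b) <=
    (1 + eps) * social_opt x * 'C(n, k)%:R.
  rewrite -ler_pdivrMr ?ltr0n ?bin_gt0 ?k_le_nagents //.
  exact: q_approx k_le_nagents (fun i => pole_inX (coord i) (b i)).
have excess_sum S : \sum_i excess q S s b i = n%:R * (social_cost x (panel_out q S b) - cc).
  by rewrite social_cost_excess // mulrC divfK // pnatr_eq0 -lt0n.
rewrite (eq_bigr _ (fun S _ => excess_sum S)) -mulr_sumr sumrB sum_draws_cst.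
rewrite [in X in _ <= X]mulrCA; apply: ler_wpM2l; first exact: ler0n.
have C_ge0 : 0 <= 'C(n, k)%:R :> RR := ler0n _ _.
have : (1 + eps) * social_opt x * 'C(n, k)%:R <= (1 + eps) * cc * 'C(n, k)%:R.
  by apply: ler_wpM2r => //; apply: ler_wpM2l => //; move: eps_gt0; lra.
have : 'C(n, k)%:R * eps * cc <= 'C(n, k)%:R * eps * (3/4).
  by apply: ler_wpM2l; rewrite // mulr_ge0 // ltW.
move: approx; move: (\sum_(S | _) _) => total; lra.
Qed.

Local Notation d := (4 * eps).

Lemma exists_good_panel : exists2 S : {set 'I_n}, #|S| == k &
  \sum_(i < n) (d / 2 - 2 * d * corr q d S (coord i)) - k%:R * (1/2 + d) <=
  n%:R * (3/4 * eps).
Proof.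
have d_ge0 : 0 <= d by rewrite mulr_ge0 // ltW.
have d_le : d <= 1/4 by move: eps_le; lra.
have [S card_S F_le] : exists2 S : {set 'I_n}, #|S| == k &
    \sum_(i < n) (d / 2 - 2 * d * corr q d S (coord i)) - #|S|%:R * (1/2 + d) <=
    n%:R * (3/4 * eps).
  apply: exists_le_of_sum_le; first exact: exists_draw k_le_nagents.
  rewrite sum_draws_cst; apply: (@le_trans _ _ (\sum_(S : {set 'I_n} | #|S| == k)
      cexp (fun=> 0) (fun s => cexp (bias d s) (fun b => \sum_i excess q S s b i)))).
    by apply: ler_sum => S _; apply: excess_mean_ge.
  rewrite -cexp_sum -[X in _ <= X](cexp_cst (fun _ : 'I_t => 0)).
  apply: ler_cexp => [l|s]; first by rewrite normr0.
  rewrite -cexp_sum -(cexp_cst (@bias t B d s) ('C(n, k)%:R * (n%:R * (3/4 * eps)))).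
  apply: ler_cexp => [i|b]; first exact: bias_le1.
  exact: sum_excess_le.
by rewrite (eqP card_S) in F_le; exists S.
Qed.

Lemma panel_size_lb : t%:R <= 512 * eps ^+ 2 * k%:R.
Proof.
have d_ge0 : 0 <= d by rewrite mulr_ge0 // ltW.
have d_le : d <= 1/4 by move: eps_le; lra.
have [S /eqP card_S good] := exists_good_panel.
pose C := \sum_j corr q d S j.
have C_sqr : C ^+ 2 <= t%:R * (d ^+ 2 * k%:R / 2).
  have := sqr_wsum_le (corr q d S) (fun _ => ler01 : 0 <= 1 :> RR).
  rewrite sumr_const card_ord; under eq_bigr do rewrite mul1r.
  under [X in _ <= _ * X]eq_bigr do rewrite mul1r.
  move/le_trans; apply; apply: ler_wpM2l; first exact: ler0n.
  have -> : k%:R = #|S|%:R :> RR by rewrite card_S.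
  rewrite -sum_card_block mulr_sumr mulr_suml.
  by apply: ler_sum => j _; apply: corr_sqr_le.
have C_lb : t%:R <= 8 * C.
  rewrite (sum_coord B (fun j => d / 2 - 2 * d * corr q d S j)) in good.
  rewrite sumrB sumr_const card_ord -mulr_sumr -/C -(mulr_natr (d / 2)) in good.
  rewrite nagentsE natrM in good.
  have k_ge1 : 1 <= k%:R :> RR by rewrite ler1n.
  have t_ge1 : 1 <= t%:R :> RR by rewrite ler1n.
  have := B_large; rewrite natrM => B_large'.
  have Beps_gt0 : 0 < B%:R * eps by lra.
  have k_eps : 0 <= k%:R * (1/16 - eps) by rewrite mulr_ge0 ?subr_ge0 // ler0n.
  have t_Beps : 0 <= B%:R * eps * (t%:R - 1) by rewrite mulr_ge0 ?subr_ge0 // ltW.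
  have : B%:R * eps * (t%:R - 8 * C) <= 0 by lra.
  by rewrite pmulr_rle0 // subr_le0.
have t_gt0' : 0 < t%:R :> RR by rewrite ltr0n.
rewrite -(ler_pM2l t_gt0').
have : t%:R * t%:R <= 8 * C * (8 * C) by apply: ler_pM => //; apply: ltW.
by move: C_sqr; rewrite expr2; lra.
Qed.

End ApproximationLowerBound.

Theorem theorem4p12 :
  exists c : RR, 0 < c /\
  forall (t : nat) (eps : RR), 0 < eps -> eps < 1/64 ->
  forall (k : nat), (1 <= k)%N ->
  forall q : ('I_k -> pt t) -> pt t,
    (forall y : 'I_k -> pt t, (forall j, inX (y j)) -> inC (q y)) ->
    (forall (n : nat) (x : 'I_n -> pt t), (k <= n)%N -> (forall i, inX (x i)) ->
       exp_panel_cost q x <= (1 + eps) * social_opt x) ->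
    c * t%:R / eps ^+ 2 <= k%:R.
Proof.
exists (1/512); split=> [|t eps eps_gt0 eps_lt k k_gt0 q q_inC q_approx]; first lra.
have [->|t_gt0] := posnP t; first by rewrite mulr0 mul0r ler0n.
pose M := (Num.truncn (4 / eps)).+1.
have M_large : 4 <= M%:R * eps.
  by rewrite -ler_pdivrMr // ltW // truncnS_gt.
have B_large : (4 * k)%:R <= (k * M)%:R * eps.
  by rewrite !natrM -mulrA [_ * k%:R]mulrC; apply: ler_wpM2l.
have eps_le : eps <= 1/16 by lra.
have := panel_size_lb q_inC q_approx eps_gt0 eps_le t_gt0 k_gt0 B_large.
by rewrite ler_pdivrMr ?exprn_gt0 //; lra.
Qed.
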